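(* Let $k\ge2$, $n\ge1$ be integers. Let $\bar{\mathcal{P}}$ and $\bar{\mathcal{P}}_p=\bar{\mathcal{P}}+\delta\bar{\mathcal{P}}$ in $\mathbb{R}^{[k,n]}$ be columnwise-substochastic tensors, and let $\mathbf{v}$ and $\mathbf{v}_p=\mathbf{v}+\delta\mathbf{v}$ in $\mathbb{R}^n$ be stochastic vectors. Let $\alpha\in[0,1)$ be such that $\varsigma:=(2k-3)\alpha(1-\alpha)^{-\frac{k-2}{k-1}}<1$, and let $\Delta:=\{\mathbf{y}\in\mathbb{R}^n_+:\mathbf{e}^T\mathbf{y}\le(1-\alpha)^{-\frac{1}{k-1}}\}$. Suppose $\mathbf{y}\in\Delta$ and $\mathbf{y}_p=\mathbf{y}+\delta\mathbf{y}\in\Delta$ satisfy $$(\mathbf{e}^T\mathbf{y})^{k-2}\mathbf{y}-\alpha\bar{\mathcal{P}}\mathbf{y}^{k-1}=\mathbf{v}\quad\text{and}\quad(\mathbf{e}^T\mathbf{y}_p)^{k-2}\mathbf{y}_p-\alpha\bar{\mathcal{P}}_p\mathbf{y}_p^{k-1}=\mathbf{v}_p.$$ Then $$\|\delta\mathbf{y}\|_1\le\frac{2k-3}{(k-1)(1-\varsigma)}\left(\frac{\alpha}{1-\alpha}\|\mathbf{R}(\delta\bar{\mathcal{P}})\|_1+\|\delta\mathbf{v}\|_1\right).$$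
   Context: For $\mathcal{P}\in\mathbb{R}^{[k,n]}$ (real tensors of order $k$, dimension $n$) and $\mathbf{y}\in\mathbb{R}^n$, $(\mathcal{P}\mathbf{y}^{k-1})_i=\sum_{i_2,\dots,i_k}p_{i i_2\dots i_k}y_{i_2}\cdots y_{i_k}$. $\bar{\mathcal{P}}$ is columnwise-substochastic if its entries are nonnegative and $\sum_{i}\bar p_{i i_2\dots i_k}\le1$ for all $i_2,\dots,i_k$. $\mathbf{e}$ is the all-ones vector; a stochastic vector is nonnegative with entries summing to $1$. $\mathbf{R}(\mathcal{P})\in\mathbb{R}^{n\times n^{k-1}}$ is the mode-1 unfolding of $\mathcal{P}$: $[\mathbf{R}(\mathcal{P})]_{i\ell}=p_{ij_2\dots j_k}$ with $\ell=j_2+(j_3-1)n+\cdots+(j_k-1)n^{k-2}$. For a matrix $M$, $\|M\|_1$ is the induced $1$-norm, i.e. the maximum absolute column sum. *)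

From HB Require Import structures.
From mathcomp Require Import all_boot all_order all_algebra.
From mathcomp Require Import all_classical all_reals.
From mathcomp Require Import exp.
Set Implicit Arguments. Unset Strict Implicit. Unset Printing Implicit Defensive.
Import Order.TTheory GRing.Theory Num.Theory.
Local Open Scope ring_scope.

(* A real tensor of order k and dimension n: entry p_{i i_2 ... i_k} is
   P i j, where j : 'I_(k-1) -> 'I_n lists (i_2, ..., i_k) (0-based:
   j m = i_{m+2}). *)
Definition tensor (R : Type) (k n : nat) :=
  'I_n -> {ffun 'I_(k.-1) -> 'I_n} -> R.

Definition tapply (R : numDomainType) (k n : nat) (P : tensor R k n)
  (y : 'I_n -> R) : 'I_n -> R :=
  fun i => \sum_(j : {ffun 'I_(k.-1) -> 'I_n}) P i j * \prod_(m < k.-1) y (j m).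

Definition tadd (R : numDomainType) (k n : nat) (P Q : tensor R k n) : tensor R k n :=
  fun i j => P i j + Q i j.

Definition col_substochastic (R : numDomainType) (k n : nat) (P : tensor R k n) :=
  (forall i j, 0 <= P i j) /\ (forall j, \sum_(i < n) P i j <= 1).

Definition stochastic (R : numDomainType) (n : nat) (v : 'I_n -> R) :=
  (forall i, 0 <= v i) /\ \sum_(i < n) v i = 1.

Definition norm1 (R : numDomainType) (n : nat) (v : 'I_n -> R) : R :=
  \sum_(i < n) `|v i|.

(* induced 1-norm of a matrix: maximal absolute column sum *)
Definition mx_norm1 (R : realDomainType) (m p : nat) (A : 'M[R]_(m, p)) : R :=
  \big[Num.max/0]_(l < p) \sum_(i < m) `|A i l|.

(* Decoding of the (0-based) column index l = sum_m j_m n^m of the mode-1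
   unfolding into the multi-index (j_0, ..., j_{k-2}) = (i_2-1, ..., i_k-1). *)
Lemma unfold_idx_proof (k n : nat) (l : 'I_(n ^ k.-1)) (m : 'I_(k.-1)) :
  ((l %/ n ^ m) %% n < n)%N.
Proof.
apply: ltn_pmod.
case: n l => [|n] l //.
case: k m l => [|[|k]] [m Hm] l //=.
by case: l; rewrite exp0n.
Qed.

Definition unfold_idx (k n : nat) (l : 'I_(n ^ k.-1)) : {ffun 'I_(k.-1) -> 'I_n} :=
  [ffun m => Ordinal (unfold_idx_proof l m)].

Definition unfold1 (R : Type) (k n : nat) (P : tensor R k n) : 'M[R]_(n, n ^ k.-1) :=
  \matrix_(i < n, l < n ^ k.-1) P i (unfold_idx l).

From HB Require Import structures.
From mathcomp Require Import all_boot all_order all_algebra.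
From mathcomp Require Import all_classical all_reals.
From mathcomp Require Import exp.
From mathcomp Require Import ring lra zify.
Set Implicit Arguments. Unset Strict Implicit. Unset Printing Implicit Defensive.
Import Order.TTheory GRing.Theory Num.Theory.
Local Open Scope ring_scope.

(* Write k = K + 2 and c = (1 - alpha)^(-1/(k-1)), so that c^(k-1) = 1/(1 - alpha)
   and every z in Delta has (e^T z)^(k-1) <= 1/(1 - alpha).  Summing the defining
   equation over i shows e^T y >= 1 for every solution.  On nonnegative vectors of
   mass at least 1, the map z |-> (e^T z)^(k-2) z is expanding up to the factor
   (2k-3)/(k-1), i.e.
     ||b - a||_1 <= (2k-3)/(k-1) ||(e^T b)^(k-2) b - (e^T a)^(k-2) a||_1.
   Subtracting the two equations, this difference equals
   dv + alpha (dP yp^(k-1) + (P yp^(k-1) - P y^(k-1))).  The first tensor term is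
   at most ||R(dP)||_1 c^(k-1); telescoping the products y_(i_2) ... y_(i_k) bounds
   the second by (k-1) c^(k-2) ||dy||_1.  The resulting term varsigma ||dy||_1 is
   absorbed into the left-hand side. *)

Lemma eq_base_digits (n K l1 l2 : nat) : (l1 < n ^ K)%N -> (l2 < n ^ K)%N ->
  (forall m, (m < K)%N -> (l1 %/ n ^ m %% n = l2 %/ n ^ m %% n)%N) -> l1 = l2.
Proof.
case: n => [|n].
  by case: K => [|K]; [rewrite expn0; case: l1; case: l2 | rewrite exp0n].
elim: K l1 l2 => [|K IH] l1 l2; first by rewrite expn0; case: l1; case: l2.
move=> lt1 lt2 digits_eq.
rewrite (divn_eq l1 n.+1) (divn_eq l2 n.+1).
have := digits_eq 0%N (ltn0Sn K); rewrite expn0 !divn1 => ->.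
congr (_ * _ + _); apply: IH; rewrite ?ltn_divLR -?expnSr //.
by move=> m lt_mK; have := digits_eq m.+1 lt_mK; rewrite expnS !divnMA.
Qed.

Lemma unfold_idx_inj (k n : nat) : injective (@unfold_idx k n).
Proof.
move=> l1 l2 eq_idx; apply: val_inj.
apply: (@eq_base_digits n k.-1) => [||m lt_mk]; rewrite ?ltn_ord //.
have := congr1 (fun f : {ffun 'I_k.-1 -> 'I_n} => val (f (Ordinal lt_mk))) eq_idx.
by rewrite !ffunE.
Qed.

Lemma unfold_idx_surj (k n : nat) (f : {ffun 'I_k.-1 -> 'I_n}) :
  exists l, f = unfold_idx l.
Proof.
have := @inj_card_onto _ _ _ (@unfold_idx_inj k n).
rewrite card_ffun !card_ord => /(_ (leqnn _) f) /codomP [l ->].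
by exists l.
Qed.

Lemma mx_norm1_ge0 (R : realDomainType) (m p : nat) (A : 'M[R]_(m, p)) :
  0 <= mx_norm1 A.
Proof. exact: bigmax_ge_id. Qed.

Lemma colsum_le_mx_norm1 (R : realDomainType) (k n : nat) (P : tensor R k n) f :
  \sum_i `|P i f| <= mx_norm1 (unfold1 P).
Proof.
have [l ->] := unfold_idx_surj f.
have -> : \sum_i `|P i (unfold_idx l)| = \sum_i `|unfold1 P i l|.
  by apply: eq_bigr => i _; rewrite mxE.
exact: (le_bigmax 0 (fun l => \sum_i `|unfold1 P i l|) l).
Qed.

Lemma prodrB_telescope_nat (R : comNzRingType) (K : nat) (x y : nat -> R) :
  \prod_(i < K) x i - \prod_(i < K) y i =
  \sum_(m < K) \prod_(i < K)
     (if (i < m)%N then x i else if i == m :> nat then x i - y i else y i).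
Proof.
elim: K => [|K IH]; first by rewrite !big_ord0 subrr.
rewrite !big_ord_recr /= ltnn eqxx.
have -> : \sum_(m < K) \prod_(i < K.+1)
    (if (i < m)%N then x i else if i == m :> nat then x i - y i else y i)
  = (\prod_(i < K) x i - \prod_(i < K) y i) * y K.
  rewrite IH mulr_suml; apply: eq_bigr => m _.
  by rewrite big_ord_recr /= ltnNge (ltnW (ltn_ord m)) (gtn_eqF (ltn_ord m)).
under [X in _ = _ + X * _]eq_bigr do rewrite ltn_ord.
ring.
Qed.

Lemma prodrB_telescope (R : comNzRingType) (K : nat) (x y : 'I_K -> R) :
  \prod_i x i - \prod_i y i =
  \sum_(m : 'I_K) \prod_(i : 'I_K)
     (if (i < m)%N then x i else if i == m then x i - y i else y i).
Proof.
case: K x y => [|K] x y; first by rewrite !big_ord0 subrr.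
have := prodrB_telescope_nat K.+1 (fun i => x (inord i)) (fun i => y (inord i)).
have prod_inord (z : 'I_K.+1 -> R) : \prod_(i < K.+1) z (inord i) = \prod_i z i.
  by apply: eq_bigr => i _; rewrite inord_val.
rewrite !prod_inord => ->; apply: eq_bigr => m _; apply: eq_bigr => i _.
by rewrite inord_val.
Qed.

Lemma sum_ffun_prod (R : comNzSemiRingType) (K n : nat) (z : 'I_n -> R) :
  \sum_(f : {ffun 'I_K -> 'I_n}) \prod_m z (f m) = (\sum_i z i) ^+ K.
Proof. by rewrite -(bigA_distr_bigA (fun _ : 'I_K => z)) prodr_const card_ord. Qed.

Lemma sum_ffun_prodrB_le (R : realDomainType) (K n : nat) (a b : 'I_n -> R) (c : R) :
  (forall i, 0 <= a i) -> (forall i, 0 <= b i) ->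
  \sum_i a i <= c -> \sum_i b i <= c ->
  \sum_(f : {ffun 'I_K.+1 -> 'I_n}) `|\prod_m a (f m) - \prod_m b (f m)|
    <= K.+1%:R * c ^+ K * \sum_i `|a i - b i|.
Proof.
move=> a_ge0 b_ge0 sum_a sum_b.
pose H (m i : 'I_K.+1) (j : 'I_n) :=
  if (i < m)%N then a j else if i == m then `|a j - b j| else b j.
have H_ge0 m i j : 0 <= H m i j by rewrite /H; case: ifP => _ //; case: ifP.
have telescope (f : {ffun 'I_K.+1 -> 'I_n}) :
    `|\prod_m a (f m) - \prod_m b (f m)| <= \sum_m \prod_i H m i (f i).
  rewrite prodrB_telescope; apply: (le_trans (ler_norm_sum _ _ _)).
  apply: ler_sum => m _; rewrite normr_prod; apply: ler_prod => i _.
  rewrite normr_ge0 /= /H; case: ifP => _; first by rewrite ger0_norm.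
  by case: ifP => _ //; rewrite ger0_norm.
have sum_H m : \sum_(f : {ffun 'I_K.+1 -> 'I_n}) \prod_i H m i (f i)
    <= c ^+ K * \sum_j `|a j - b j|.
  rewrite -(bigA_distr_bigA (H m)) (bigD1 m) //= mulrC /H ltnn eqxx.
  apply: ler_wpM2r; first exact: sumr_ge0.
  apply: (@le_trans _ _ (\prod_(i | i != m) c)); last first.
    by rewrite prodr_const cardC1 card_ord.
  apply: ler_prod => i ne_im; rewrite (sumr_ge0 _ (fun j _ => H_ge0 m i j)) /=.
  case: (i < m)%N => //.
  by rewrite (negbTE ne_im).
apply: (@le_trans _ _ (\sum_(f : {ffun 'I_K.+1 -> 'I_n}) \sum_m \prod_i H m i (f i))).
  by apply: ler_sum => f _; apply: telescope.
have -> : K.+1%:R * c ^+ K * \sum_i `|a i - b i| =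
          \sum_(m : 'I_K.+1) c ^+ K * \sum_i `|a i - b i|.
  by rewrite sumr_const card_ord -mulrA mulr_natl.
by rewrite exchange_big; apply: ler_sum.
Qed.

Lemma tapply_ge0 (R : numDomainType) (k n : nat) (P : tensor R k n) z i :
  (forall i j, 0 <= P i j) -> (forall i, 0 <= z i) -> 0 <= tapply P z i.
Proof.
move=> P_ge0 z_ge0; apply: sumr_ge0 => f _.
by apply: mulr_ge0 => //; apply: prodr_ge0.
Qed.

Lemma tapply_tadd (R : numDomainType) (k n : nat) (P Q : tensor R k n) z i :
  tapply (tadd P Q) z i = tapply P z i + tapply Q z i.
Proof. by rewrite /tapply -big_split; apply: eq_bigr => f _; rewrite mulrDl. Qed.

Lemma norm1_tapply_le (R : realDomainType) (k n : nat) (P : tensor R k n) z :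
  (forall i, 0 <= z i) ->
  norm1 (tapply P z) <= mx_norm1 (unfold1 P) * (\sum_i z i) ^+ k.-1.
Proof.
move=> z_ge0; have prod_ge0 (f : {ffun 'I_k.-1 -> 'I_n}) : 0 <= \prod_m z (f m).
  exact: prodr_ge0.
apply: (@le_trans _ _ (\sum_i \sum_f `|P i f| * \prod_m z (f m))).
  apply: ler_sum => i _; apply: (le_trans (ler_norm_sum _ _ _)).
  by apply: ler_sum => f _; rewrite normrM [X in _ * X]ger0_norm.
rewrite exchange_big -sum_ffun_prod mulr_sumr; apply: ler_sum => f _.
by rewrite -mulr_suml ler_wpM2r // colsum_le_mx_norm1.
Qed.

Lemma norm1_tapply_sub_le (R : realDomainType) (K n : nat) (P : tensor R K.+2 n)
    (a b : 'I_n -> R) (c : R) :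
  col_substochastic P -> (forall i, 0 <= a i) -> (forall i, 0 <= b i) ->
  \sum_i a i <= c -> \sum_i b i <= c ->
  norm1 (fun i => tapply P a i - tapply P b i) <=
  K.+1%:R * c ^+ K * norm1 (fun i => a i - b i).
Proof.
move=> [P_ge0 P_colsum] a_ge0 b_ge0 sum_a sum_b.
apply: (le_trans _ (sum_ffun_prodrB_le K a_ge0 b_ge0 sum_a sum_b)).
apply: (@le_trans _ _
  (\sum_i \sum_f P i f * `|\prod_m a (f m) - \prod_m b (f m)|)).
  apply: ler_sum => i _; rewrite /tapply -sumrB.
  apply: (le_trans (ler_norm_sum _ _ _)); apply: ler_sum => f _.
  by rewrite -mulrBr normrM ger0_norm.
rewrite exchange_big; apply: ler_sum => f _.
by rewrite -mulr_suml ler_piMl ?P_colsum.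
Qed.

Lemma mul_subrX_le (R : realDomainType) (j : nat) (m M : R) : 0 <= m -> m <= M ->
  m * (M ^+ j - m ^+ j) <= j%:R * M ^+ j * (M - m).
Proof.
move=> m_ge0 le_mM; have M_ge0 : 0 <= M := le_trans m_ge0 le_mM.
rewrite subrXX mulrCA mulrC ler_wpM2r ?subr_ge0 //.
have -> : j%:R * M ^+ j = \sum_(i < j) M ^+ j by rewrite sumr_const card_ord mulr_natl.
rewrite mulr_sumr; apply: ler_sum => i _; rewrite mulrCA -exprS.
have -> : M ^+ j = M ^+ (j.-1 - i) * M ^+ i.+1.
  by rewrite -exprD; congr (_ ^+ _); have := ltn_ord i; lia.
by rewrite ler_wpM2l ?exprn_ge0 // lerXn2r ?nnegrE.
Qed.

Lemma subrXS_ge (R : realDomainType) (j : nat) (m M : R) : 1 <= m -> m <= M ->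
  j.+1%:R * (M - m) <= M ^+ j.+1 - m ^+ j.+1.
Proof.
move=> m_ge1 le_mM; rewrite subrXX mulrC ler_wpM2l ?subr_ge0 //.
have -> : j.+1%:R = \sum_(i < j.+1) (1 : R) by rewrite sumr_const card_ord.
by apply: ler_sum => i _; apply: mulr_ege1; apply: exprn_ege1; rewrite // (le_trans m_ge1).
Qed.

Lemma homog_gap_le (R : realFieldType) (j : nat) (m M : R) : 1 <= m -> m <= M ->
  m * (M ^+ j - m ^+ j) / M ^+ j <= j%:R / j.+1%:R * (M ^+ j.+1 - m ^+ j.+1).
Proof.
move=> m_ge1 le_mM; have Mj_gt0 : 0 < M ^+ j.
  by apply: exprn_gt0; apply: lt_le_trans le_mM; apply: lt_le_trans m_ge1.
rewrite ler_pdivrMr //; apply: (le_trans (mul_subrX_le _ _ le_mM)).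
  exact: le_trans ler01 m_ge1.
have -> : j%:R * M ^+ j * (M - m) = j%:R / j.+1%:R * (j.+1%:R * (M - m)) * M ^+ j.
  by field; rewrite nat1r pnatr_eq0.
apply: ler_wpM2r; first exact: ltW.
by apply: ler_wpM2l; [apply: divr_ge0 | apply: subrXS_ge].
Qed.

Lemma norm1_subC (R : numDomainType) (n : nat) (a b : 'I_n -> R) :
  norm1 (fun i => a i - b i) = norm1 (fun i => b i - a i).
Proof. by apply: eq_bigr => i _; rewrite distrC. Qed.

Lemma norm1_sub_le_homog (R : realFieldType) (n j : nat) (a b : 'I_n -> R) :
  (forall i, 0 <= a i) -> (forall i, 0 <= b i) ->
  1 <= \sum_i a i -> 1 <= \sum_i b i ->
  norm1 (fun i => b i - a i) <=
    (1 + j%:R / j.+1%:R) *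
    norm1 (fun i => (\sum_l b l) ^+ j * b i - (\sum_l a l) ^+ j * a i).
Proof.
wlog le_ab : a b / \sum_i a i <= \sum_i b i.
  move=> wlog a_ge0 b_ge0 sa_ge1 sb_ge1.
  have [le_ab|/ltW le_ba] := leP (\sum_i a i) (\sum_i b i); first exact: wlog.
  by rewrite norm1_subC [X in _ <= _ * X]norm1_subC; apply: wlog.
move=> a_ge0 b_ge0 sa_ge1 _.
set sa := \sum_i a i in le_ab sa_ge1 *; set sb := \sum_i b i in le_ab *.
pose u i := sb ^+ j * b i - sa ^+ j * a i.
pose D := (sb ^+ j - sa ^+ j) / sb ^+ j.
have sbj_ge1 : 1 <= sb ^+ j by apply: exprn_ege1; apply: le_trans le_ab.
have sbj_gt0 : 0 < sb ^+ j := lt_le_trans ltr01 sbj_ge1.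
have D_ge0 : 0 <= D.
  apply: divr_ge0; last exact: ltW.
  by rewrite subr_ge0 lerXn2r // nnegrE (le_trans ler01) // (le_trans sa_ge1).
have pointwise i : `|b i - a i| <= `|u i| + a i * D.
  have -> : b i - a i = u i / sb ^+ j - a i * D by rewrite /u /D; field; rewrite gt_eqF.
  apply: (le_trans (ler_normB _ _)); rewrite (ger0_norm (mulr_ge0 (a_ge0 i) D_ge0)).
  by rewrite lerD2r normrM normfV (gtr0_norm sbj_gt0) ler_pdivrMr // ler_peMr.
have sum_u : \sum_i u i = sb ^+ j.+1 - sa ^+ j.+1.
  by rewrite /u sumrB -!mulr_sumr !exprSr.
have gap : sa * D <= j%:R / j.+1%:R * norm1 u.
  rewrite mulrA; apply: (le_trans (homog_gap_le j sa_ge1 le_ab)); rewrite -sum_u.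
  by rewrite ler_wpM2l ?divr_ge0 // (le_trans (ler_norm _) (ler_norm_sum _ _ _)).
apply: (le_trans (ler_sum _ (fun i _ => pointwise i))).
rewrite big_split /= -mulr_suml mulrDl mul1r lerD2l.
exact: gap.
Qed.

Lemma homog_sum_ge1 (R : realFieldType) (n j : nat) (z T v : 'I_n -> R) (alpha : R) :
  (forall i, 0 <= z i) -> 0 <= alpha -> (forall i, 0 <= T i) -> \sum_i v i = 1 ->
  (forall i, (\sum_l z l) ^+ j * z i - alpha * T i = v i) -> 1 <= \sum_l z l.
Proof.
move=> z_ge0 alpha_ge0 T_ge0 sum_v z_eq.
have sumX : (\sum_l z l) ^+ j.+1 = 1 + alpha * \sum_i T i.
  rewrite -sum_v -(eq_bigr _ (fun i _ => z_eq i)) sumrB -!mulr_sumr -exprSr.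
  by rewrite subrK.
have : 1 <= (\sum_l z l) ^+ j.+1.
  by rewrite sumX lerDl mulr_ge0 // sumr_ge0.
apply: contraLR; rewrite -!ltNge => sum_lt1.
by rewrite exprn_ilt1 ?sumr_ge0.
Qed.

Lemma powR_rootN_expn (R : realType) (x : R) (m K : nat) : 0 <= x ->
  powR x (- (m%:R / K.+1%:R)) = powR x (- (1 / K.+1%:R)) ^+ m.
Proof.
move=> x_ge0; rewrite -powR_mulrn ?powR_ge0 // -powRrM.
by rewrite mulNr mul1r mulrC.
Qed.

Section PerturbationBound.

Variables (R : realFieldType) (K n : nat) (alpha c : R).
Variables (P dP : tensor R K.+2 n) (v dv y yp : 'I_n -> R).

Hypotheses (alpha_ge0 : 0 <= alpha) (cXS : c ^+ K.+1 = (1 - alpha)^-1).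
Hypotheses (P_sub : col_substochastic P) (Pp_sub : col_substochastic (tadd P dP)).
Hypotheses (sum_v : \sum_i v i = 1) (sum_vp : \sum_i (v i + dv i) = 1).
Hypotheses (y_ge0 : forall i, 0 <= y i) (sum_y_le : \sum_i y i <= c).
Hypotheses (yp_ge0 : forall i, 0 <= yp i) (sum_yp_le : \sum_i yp i <= c).
Hypothesis y_eq : forall i, (\sum_l y l) ^+ K * y i - alpha * tapply P y i = v i.
Hypothesis yp_eq : forall i,
  (\sum_l yp l) ^+ K * yp i - alpha * tapply (tadd P dP) yp i = v i + dv i.

Lemma perturbation_eq i :
  (\sum_l yp l) ^+ K * yp i - (\sum_l y l) ^+ K * y i =
  dv i + alpha * (tapply dP yp i + (tapply P yp i - tapply P y i)).
Proof. by move: (y_eq i) (yp_eq i); rewrite tapply_tadd; lra. Qed.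

Lemma norm1_perturbation_le :
  norm1 (fun i => (\sum_l yp l) ^+ K * yp i - (\sum_l y l) ^+ K * y i) <=
  norm1 dv + alpha * (mx_norm1 (unfold1 dP) / (1 - alpha) +
                      K.+1%:R * c ^+ K * norm1 (fun i => yp i - y i)).
Proof.
have tensor_term : norm1 (tapply dP yp) <= mx_norm1 (unfold1 dP) / (1 - alpha).
  apply: (le_trans (norm1_tapply_le dP yp_ge0)); rewrite -cXS.
  have sum_yp_ge0 : 0 <= \sum_i yp i := sumr_ge0 _ (fun i _ => yp_ge0 i).
  apply: ler_wpM2l; first exact: mx_norm1_ge0.
  by rewrite lerXn2r // nnegrE (le_trans sum_yp_ge0).
have vector_term := norm1_tapply_sub_le P_sub yp_ge0 y_ge0 sum_yp_le sum_y_le.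
apply: (@le_trans _ _ (\sum_i (`|dv i| + alpha * (`|tapply dP yp i| +
                          `|tapply P yp i - tapply P y i|)))).
  apply: ler_sum => i _; rewrite perturbation_eq.
  rewrite (le_trans (ler_normD _ _)) // lerD2l normrM ger0_norm //.
  by rewrite ler_wpM2l // ler_normD.
rewrite big_split /= -mulr_sumr big_split /= lerD2l ler_wpM2l //.
exact: lerD.
Qed.

Hypothesis varsigma_lt1 : (K.+1 + K)%:R * alpha * c ^+ K < 1.

Lemma perturbation_bound :
  norm1 (fun i => yp i - y i) <=
  (K.+1 + K)%:R / (K.+1%:R * (1 - (K.+1 + K)%:R * alpha * c ^+ K)) *
  (alpha / (1 - alpha) * mx_norm1 (unfold1 dP) + norm1 dv).
Proof.
have [P_ge0 _] := P_sub; have [Pp_ge0 _] := Pp_sub.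
have sum_y_ge1 :=
  homog_sum_ge1 y_ge0 alpha_ge0 (fun i => tapply_ge0 i P_ge0 y_ge0) sum_v y_eq.
have sum_yp_ge1 :=
  homog_sum_ge1 yp_ge0 alpha_ge0 (fun i => tapply_ge0 i Pp_ge0 yp_ge0) sum_vp yp_eq.
have lhs_le := norm1_sub_le_homog K y_ge0 yp_ge0 sum_y_ge1 sum_yp_ge1.
set Q := 1 + K%:R / K.+1%:R in lhs_le.
have Q_ge0 : 0 <= Q by rewrite addr_ge0 ?divr_ge0.
have QK : Q * K.+1%:R = (K.+1 + K)%:R by rewrite /Q natrD; field; rewrite nat1r pnatr_eq0.
set D := norm1 _ in lhs_le *; set E := alpha / (1 - alpha) * _ + _.
move: varsigma_lt1; set sigma := (K.+1 + K)%:R * alpha * c ^+ K => sigma_lt1.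
have absorb : D <= Q * E + sigma * D.
  apply: (le_trans lhs_le); apply: (le_trans (ler_wpM2l Q_ge0 norm1_perturbation_le)).
  by rewrite [leLHS](_ : _ = Q * E + sigma * D) // -/D /E /sigma -QK; ring.
have -> : (K.+1 + K)%:R / (K.+1%:R * (1 - sigma)) * E = Q * E / (1 - sigma).
  by rewrite -QK; field; rewrite nat1r pnatr_eq0 subr_eq0 gt_eqF.
by rewrite ler_pdivlMr ?subr_gt0 //; lra.
Qed.

End PerturbationBound.

Theorem theorem3p12 (R : realType) (k n : nat) (hk : (2 <= k)%N) (hn : (1 <= n)%N)
  (P dP : tensor R k n) (v dv y dy : 'I_n -> R) (alpha : R) :
  col_substochastic P ->
  col_substochastic (tadd P dP) ->
  stochastic v ->
  stochastic (fun i => v i + dv i) ->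
  0 <= alpha -> alpha < 1 ->
  let varsigma := (2 * k - 3)%:R * alpha *
                  powR (1 - alpha) (- ((k - 2)%:R / (k - 1)%:R)) in
  varsigma < 1 ->
  let inDelta (z : 'I_n -> R) :=
    (forall i, 0 <= z i) /\
    \sum_(i < n) z i <= powR (1 - alpha) (- (1 / (k - 1)%:R)) in
  let yp := fun i => y i + dy i in
  inDelta y -> inDelta yp ->
  (forall i, (\sum_(j < n) y j) ^+ (k - 2) * y i
             - alpha * tapply P y i = v i) ->
  (forall i, (\sum_(j < n) yp j) ^+ (k - 2) * yp i
             - alpha * tapply (tadd P dP) yp i = v i + dv i) ->
  norm1 dy <= (2 * k - 3)%:R / ((k - 1)%:R * (1 - varsigma)) *
              (alpha / (1 - alpha) * mx_norm1 (unfold1 dP) + norm1 dv).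
Proof.
case: k hk P dP => [|[|K]] // _ P dP.
rewrite (_ : (2 * K.+2 - 3 = K.+1 + K)%N); last by lia.
rewrite (_ : (K.+2 - 2 = K)%N); last by lia.
move=> P_sub Pp_sub [_ sum_v] [_ sum_vp] alpha_ge0 alpha_lt1 varsigma.
have one_sub_alpha_ge0 : 0 <= 1 - alpha by rewrite subr_ge0 ltW.
rewrite /varsigma powR_rootN_expn //.
set c := powR (1 - alpha) _.
move=> varsigma_lt1 [y_ge0 sum_y] [yp_ge0 sum_yp] y_eq yp_eq.
have cXS : c ^+ K.+1 = (1 - alpha)^-1.
  by rewrite /c -powR_rootN_expn // divff ?pnatr_eq0 // powR_inv1.
have -> : norm1 dy = norm1 (fun i => y i + dy i - y i).
  by apply: eq_bigr => i _; rewrite addrAC subrr add0r.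
exact: (perturbation_bound alpha_ge0 cXS P_sub Pp_sub sum_v sum_vp
          y_ge0 sum_y yp_ge0 sum_yp y_eq yp_eq varsigma_lt1).
Qed.
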